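(* Let $t\in\mathbb N$ and $N=\lvert t\rvert_{\mathtt{01}}$. Then $\frac34N\le v_t\le 5N$.
   Context: For $n\in\mathbb N=\{0,1,\dots\}$, $\lvert n\rvert_{\mathtt{01}}$ denotes the number of maximal blocks of $\mathtt 1$s in the binary expansion of $n$ (equivalently, the number of occurrences of $\mathtt{01}$ in the binary expansion padded with a leading $\mathtt 0$). Define $(v_t)_{t\in\mathbb N}$ by $v_0=0$, $v_1=3/2$, and for all $t\in\mathbb N$: $v_{4t}=v_{2t}$, $v_{4t+2}=v_{2t+1}+1$, $v_{2t+1}=\frac{v_t+v_{t+1}}2+\frac34$. *)

From mathcomp Require Import all_boot all_order all_algebra.
Set Implicit Arguments. Unset Strict Implicit. Unset Printing Implicit Defensive.
Import Order.TTheory GRing.Theory Num.Theory.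
Local Open Scope ring_scope.

Fixpoint bits_aux (fuel n : nat) : seq bool :=
  match fuel with
  | 0 => [::]
  | f.+1 => if n == 0%N then [::] else odd n :: bits_aux f n./2
  end.
Definition bits (n : nat) : seq bool := bits_aux n n.

(* |n|_01 : number of maximal blocks of 1s in the binary expansion of n,
   i.e. number of positions i with bit i = 1 and bit (i+1) = 0
   (bits beyond the expansion are 0). *)
Definition blocks01 (n : nat) : nat :=
  count (fun i => nth false (bits n) i && ~~ nth false (bits n) i.+1)
        (iota 0 (size (bits n))).

(* v_t, by the recursion v_0 = 0, v_1 = 3/2, v_{4t} = v_{2t},
   v_{4t+2} = v_{2t+1} + 1, v_{2t+1} = (v_t + v_{t+1})/2 + 3/4.
   The fuel argument f only guarantees termination; fuel t suffices. *)
Fixpoint v_aux (f t : nat) : rat :=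
  match f with
  | 0 => 0
  | f'.+1 =>
    if t == 0%N then 0
    else if t == 1%N then 3%:R / 2%:R
    else if odd t then
      (v_aux f' t./2 + v_aux f' t./2.+1) / 2%:R + 3%:R / 4%:R
    else if odd t./2 then
      v_aux f' t./2 + 1
    else v_aux f' t./2
  end.
Definition v (t : nat) : rat := v_aux t t.

From mathcomp Require Import all_boot all_order all_algebra.
From mathcomp Require Import zify lra.
Import Order.TTheory GRing.Theory Num.Theory.
Local Open Scope ring_scope.

(* For t = 2s and t = 2s+1, the pair (v_t, v_{t+1}) is an affine function of
   (v_s, v_{s+1}), and (|t|_01, |t+1|_01) is determined by (|s|_01, |s+1|_01)
   and the parity of s.  So lower bounds on the slacks 5|t|_01 - v_t and
   v_t - 3/4 |t|_01 at t and t+1 can be pushed from s to 2s and 2s+1.  The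
   bounds that propagate depend on the parity of t and on |t+1|_01 - |t|_01
   (0 or -1 for odd t, 0 or 1 for even t); the resulting four-state invariant
   holds with equality at t = 0. *)

Lemma v_aux_fuel f g t : (t <= f)%N -> (t <= g)%N -> v_aux f t = v_aux g t.
Proof.
elim: f g t => [|f IH] [|g] t le_tf le_tg; try by have -> : t = 0%N by lia.
rewrite /=; case: (t =P 0%N) => // t_neq0; case: (t =P 1%N) => // t_neq1.
rewrite (IH g t./2); try by rewrite -divn2; lia.
case: ifP (odd_double_half t) => // t_odd t_eq.
by rewrite (IH g t./2.+1) //; lia.
Qed.

Lemma v_auxE f t : (t <= f)%N -> v_aux f t = v t.
Proof. by move=> le_tf; rewrite /v (@v_aux_fuel f t). Qed.

Lemma vE t : (1 < t)%N -> v t =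
  if odd t then (v t./2 + v t./2.+1) / 2 + 3 / 4
  else if odd t./2 then v t./2 + 1 else v t./2.
Proof.
move=> lt1t; have t_eq := odd_double_half t.
have -> : v t = v_aux t.-1.+1 t by rewrite prednK //; lia.
rewrite /= ifN; last by lia.
rewrite ifN; last by lia.
rewrite (@v_auxE _ t./2); last by rewrite -divn2; lia.
case: ifP t_eq => // t_odd t_eq.
by rewrite (@v_auxE _ t./2.+1) //; lia.
Qed.

Lemma v0 : v 0%N = 0. Proof. by []. Qed.

Lemma v1 : v 1%N = 3 / 2. Proof. by []. Qed.

Lemma v_double t : v t.*2 = v t + (odd t)%:R.
Proof.
case: t => [|t]; first by rewrite v0 addr0.
by rewrite vE -?doubleS // odd_double doubleK; case: odd; rewrite ?addr0.
Qed.

Lemma v_double_add1 t : v t.*2.+1 = (v t + v t.+1) / 2 + 3 / 4.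
Proof.
case: t => [|t]; first by rewrite v0 v1; lra.
by rewrite vE ?doubleS //= odd_double uphalf_double.
Qed.

Lemma bits_aux_fuel f g n : (n <= f)%N -> (n <= g)%N -> bits_aux f n = bits_aux g n.
Proof.
elim: f g n => [|f IH] [|g] n le_nf le_ng; try by have -> : n = 0%N by lia.
rewrite /=; case: (n =P 0%N) => // n_neq0.
by rewrite (IH g) // -divn2; lia.
Qed.

Lemma bitsE n : (0 < n)%N -> bits n = odd n :: bits n./2.
Proof.
move=> n_gt0; have -> : bits n = bits_aux n.-1.+1 n by rewrite prednK.
rewrite /= ifN; last by lia.
by rewrite /bits (@bits_aux_fuel _ n./2 n./2) // -divn2; lia.
Qed.

Lemma head_bits n : head false (bits n) = odd n.
Proof. by case: n => [|n] //; rewrite bitsE. Qed.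

Definition block_ends (s : seq bool) : nat :=
  count (fun i => nth false s i && ~~ nth false s i.+1) (iota 0 (size s)).

Lemma block_ends_cons b s :
  block_ends (b :: s) = ((b && ~~ head false s) + block_ends s)%N.
Proof.
rewrite /block_ends /= -[1%N]/(1 + 0)%N iotaDl count_map.
by case: s.
Qed.

Lemma blocks01E n : blocks01 n = block_ends (bits n).
Proof. by []. Qed.

Lemma blocks01_double n : blocks01 n.*2 = blocks01 n.
Proof.
case: n => [|n] //.
by rewrite !blocks01E bitsE -?doubleS // block_ends_cons odd_double doubleK.
Qed.

Lemma blocks01_double_add1 n : blocks01 n.*2.+1 = (blocks01 n + ~~ odd n)%N.
Proof.
rewrite !blocks01E bitsE // block_ends_cons /= uphalf_double.
by rewrite odd_double head_bits addnC.
Qed.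

Lemma double_ind {P : nat -> Prop} :
  P 0%N -> (forall n, P n -> P n.*2 /\ P n.*2.+1) -> forall n, P n.
Proof.
move=> P0 PS; elim/ltn_ind=> n IH; case: (posnP n) => [-> // | n_gt0].
have [P2 P21] : P n./2.*2 /\ P n./2.*2.+1 by apply/PS/IH; rewrite -divn2; lia.
by rewrite -[n]odd_double_half; case: odd; rewrite ?add0n.
Qed.

Definition upper_slack t : rat := 5 * (blocks01 t)%:R - v t.

Definition lower_slack t : rat := v t - 3 / 4 * (blocks01 t)%:R.

Definition slacks_ge t (u u' l l' : rat) : Prop :=
  [/\ u <= upper_slack t, u' <= upper_slack t.+1,
      l <= lower_slack t & l' <= lower_slack t.+1].

Definition slack_invariant t : Prop :=
  if odd t then
    blocks01 t.+1 = blocks01 t /\ slacks_ge t 1 (5 / 2) (3 / 4) (7 / 4)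
    \/ (blocks01 t.+1 + 1)%N = blocks01 t /\ slacks_ge t (7 / 2) 0 (15 / 8) 3
  else
    blocks01 t.+1 = blocks01 t /\ slacks_ge t 0 1 (7 / 4) 2
    \/ blocks01 t.+1 = (blocks01 t + 1)%N /\ slacks_ge t 0 (7 / 2) 0 (3 / 4).

Lemma slack_invariant0 : slack_invariant 0%N.
Proof.
have N0 : blocks01 0%N = 0%N by [].
have N1 : blocks01 1%N = 1%N by [].
right; rewrite /slacks_ge /upper_slack /lower_slack v0 v1 N0 N1.
by split; [| split; lra].
Qed.

Lemma slack_invariant_double s :
  slack_invariant s -> slack_invariant s.*2 /\ slack_invariant s.*2.+1.
Proof.
rewrite /slack_invariant /slacks_ge /upper_slack /lower_slack -doubleS.
rewrite !v_double v_double_add1 !blocks01_double blocks01_double_add1.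
rewrite !oddS odd_double.
move: (v s) (v s.+1) (blocks01 s) (blocks01 s.+1) => a b n m.
case: (odd s) => /= [[] [? bounds] | [] [? bounds]]; subst; case: bounds => *;
  rewrite ?addn0 ?natrD; split;
  by (left; split; [lia | split; lra]) || (right; split; [lia | split; lra]).
Qed.

Lemma slack_invariant_holds t : slack_invariant t.
Proof. exact: double_ind slack_invariant0 slack_invariant_double t. Qed.

Lemma slacks_ge0 t : 0 <= upper_slack t /\ 0 <= lower_slack t.
Proof.
have := slack_invariant_holds t.
rewrite /slack_invariant /slacks_ge /upper_slack /lower_slack.
by case: odd => -[[_ [? _ ? _]] | [_ [? _ ? _]]]; split; lra.
Qed.

Theorem proposition3p11 (t : nat) :
  3%:R / 4%:R * (blocks01 t)%:R <= v t /\ v t <= 5%:R * (blocks01 t)%:R.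
Proof.
have [] := slacks_ge0 t.
by rewrite /upper_slack /lower_slack; split; lra.
Qed.
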